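(* Let $f(x_1,x_2,x_3,x_4)=\det P(x_1,x_2,x_3,x_4)$ where $$P(x_1,x_2,x_3,x_4)=\begin{bmatrix}x_1 & x_2 & x_3 & x_4\\ -nx_2 & x_1+mx_2 & -nx_4 & x_3+mx_4\\ -qx_3 & -qx_4 & x_1+px_3 & x_2+px_4\\ qnx_4 & -q(x_3+mx_4) & -nx_2-pnx_4 & x_1+mx_2+p(x_3+mx_4)\end{bmatrix}$$ with $(m,n,p,q)=(5,-23,2,-7)$. Then the quartic diophantine equation $f(x_1,x_2,x_3,x_4)=1$ has infinitely many solutions in positive integers (one of them being $(6,2,3,1)$). *)

From mathcomp Require Import all_boot all_order all_algebra.
Set Implicit Arguments. Unset Strict Implicit. Unset Printing Implicit Defensive.
Import GRing.Theory Num.Theory.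
Local Open Scope ring_scope.

Definition Pmat (m n p q x1 x2 x3 x4 : int) : 'M[int]_4 :=
  \matrix_(i < 4, j < 4)
    nth 0 (nth [::] [::
      [:: x1; x2; x3; x4];
      [:: - n * x2; x1 + m * x2; - n * x4; x3 + m * x4];
      [:: - q * x3; - q * x4; x1 + p * x3; x2 + p * x4];
      [:: q * n * x4; - q * (x3 + m * x4); - n * x2 - p * n * x4;
          x1 + m * x2 + p * (x3 + m * x4)]] i) j.

Definition fpoly (m n p q x1 x2 x3 x4 : int) : int :=
  \det (Pmat m n p q x1 x2 x3 x4).

Definition is_sol (x : int * int * int * int) : Prop :=
  let '(x1, x2, x3, x4) := x in
  0 < x1 /\ 0 < x2 /\ 0 < x3 /\ 0 < x4 /\
  fpoly 5 (-23) 2 (-7) x1 x2 x3 x4 = 1.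

From mathcomp Require Import all_boot all_order all_algebra.
From mathcomp Require Import ring zify.
Import Order.TTheory GRing.Theory Num.Theory.
Local Open Scope ring_scope.

(* P(x) is the regular representation of a commutative quartic
   algebra: for every choice of the parameters (m,n,p,q), the product
   P(x) P(y) is again of the form P(z), where z = x * y is the row vector
   x P(y).  Hence f = det P is multiplicative, f(x * y) = f(x) f(y), and the
   solutions of f = 1 form a monoid.  For (m,n,p,q) = (5,-23,2,-7) the point
   u = (6,2,3,1) satisfies f(u) = 1, and right multiplication by u has
   positive coefficients, so the powers u, u^2, u^3, ... are positive
   solutions whose first coordinates strictly increase.  A family with
   unbounded first coordinate cannot be contained in a finite list. *)

Notation quad := (int * int * int * int)%type.

Definition Pq (m n p q : int) (x : quad) : 'M[int]_4 :=
  let '(x1, x2, x3, x4) := x in Pmat m n p q x1 x2 x3 x4.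

Definition qmul (m n p q : int) (x y : quad) : quad :=
  let '(x1, x2, x3, x4) := x in
  let M := Pq m n p q y in
  (x1 * M 0 0 + x2 * M 1 0 + x3 * M 2 0 + x4 * M 3 0,
   x1 * M 0 1 + x2 * M 1 1 + x3 * M 2 1 + x4 * M 3 1,
   x1 * M 0 2 + x2 * M 1 2 + x3 * M 2 2 + x4 * M 3 2,
   x1 * M 0 3 + x2 * M 1 3 + x3 * M 2 3 + x4 * M 3 3).

Lemma Pq_mul m n p q x y :
  Pq m n p q (qmul m n p q x y) = Pq m n p q x *m Pq m n p q y.
Proof.
case: x => [[[x1 x2] x3] x4]; case: y => [[[y1 y2] y3] y4].
apply/matrixP => i j; rewrite /= !mxE !big_ord_recl big_ord0 !mxE.
by case: i => [[|[|[|[|?]]]] Hi] //=; case: j => [[|[|[|[|?]]]] Hj] //=; ring.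
Qed.

Lemma detP_mul m n p q x y :
  \det (Pq m n p q (qmul m n p q x y))
  = \det (Pq m n p q x) * \det (Pq m n p q y).
Proof. by rewrite Pq_mul det_mulmx. Qed.

(* Laplace expansion along the first row, with the cofactor sign made
   explicit; iterating it evaluates a determinant of a concrete matrix. *)
Lemma det_expand_row0 k (A : 'M[int]_k.+1) :
  \det A = \sum_(j < k.+1) A ord0 j * ((-1) ^+ j * \det (row' ord0 (col' j A))).
Proof.
by rewrite (expand_det_row _ ord0); apply: eq_bigr => j _; rewrite /cofactor add0n.
Qed.

Notation P := (Pq 5 (-23) 2 (-7)).
Notation mul := (qmul 5 (-23) 2 (-7)).

Definition u : quad := (6, 2, 3, 1).

Lemma detP_u : \det (P u) = 1.
Proof.
rewrite det_expand_row0 !big_ord_recl big_ord0 !det_expand_row0.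
rewrite !big_ord_recl !big_ord0 !det_expand_row0 !big_ord_recl !big_ord0.
by rewrite !det_mx11 !mxE; vm_compute.
Qed.

(* Right multiplication by u preserves positive solutions and increases the
   first coordinate: its matrix P(u) has positive entries, and diagonal
   entry 6 > 1. *)
Lemma sol_mul_u x : is_sol x -> is_sol (mul x u) /\ x.1.1.1 < (mul x u).1.1.1.
Proof.
case: x => [[[x1 x2] x3] x4] [p1 [p2 [p3 [p4 f_x]]]].
have f_xu : \det (P (mul (x1, x2, x3, x4) u)) = 1.
  by rewrite detP_mul detP_u mulr1; exact: f_x.
move: f_xu; rewrite /= !mxE /= => f_xu.
by split; [do 4!(split; first lia) | lia].
Qed.

Fixpoint upow (k : nat) : quad := if k is k'.+1 then mul (upow k') u else u.

Lemma upow_sol k : is_sol (upow k) /\ k%:Z < (upow k).1.1.1.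
Proof.
elim: k => [|k [sol_k big_k]]; first by split; do ?split; exact: detP_u.
have [sol_Sk grows] := sol_mul_u (upow k) sol_k.
by split => //=; lia.
Qed.

Lemma unbounded_not_finite (T : eqType) (S : T -> Prop) (weight : T -> nat) :
  (forall N, exists2 x, S x & (N < weight x)%N) ->
  forall s : seq T, exists x, S x /\ x \notin s.
Proof.
move=> unbounded s; have [x Sx big_x] := unbounded (\max_(y <- s) weight y)%N.
exists x; split => //; apply/negP => /(@leq_bigmax_seq _ _ xpredT weight) xs.
by move: big_x; rewrite ltnNge xs.
Qed.

Theorem mainTheorem5 :
  is_sol (6, 2, 3, 1) /\
  (forall s : seq (int * int * int * int),
     exists x, is_sol x /\ x \notin s).
Proof.
split; first exact: (upow_sol 0).1.
apply: (@unbounded_not_finite _ _ (fun x : quad => `|x.1.1.1|%N)) => N.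
have [sol_N big_N] := upow_sol N.
exists (upow N) => //; rewrite -ltz_nat gtz0_abs //.
by apply: le_lt_trans big_N.
Qed.
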